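(* Let $d\ge2$. Then $$\sum_{k\ge1}W(D_{n_k-1,d};q)z^k=z\,\frac{(d+1)q+\binom{d+1}{2}q^2(1+z)}{(1-z)(1-dz)(1-d^2q^2z)}.$$
   Context: For a connected graph $G$, $W(G;q)=\sum_{\{u,v\}}q^{d(u,v)}$ over unordered pairs of distinct vertices, $d$ the graph distance. The $d$-ary dendrimer $D_{n,d}$ is the tree on vertex set $\{1,\ldots,n\}$ defined inductively: $D_{1,d}$ is the single vertex $1$, and $D_{n,d}$ is obtained from $D_{n-1,d}$ by attaching a new leaf $n$ to the smallest-numbered vertex of $D_{n-1,d}$ having degree $\le d$. $n_k=2+(d+1)\frac{d^k-1}{d-1}$; thus $D_{n_k-1,d}$ is the complete dendrimer in which the root has $d+1$ children, every other non-leaf has $d$ children, and all leaves are at distance $k$ from the root. *)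

From mathcomp Require Import all_boot all_order all_algebra.
Set Implicit Arguments. Unset Strict Implicit. Unset Printing Implicit Defensive.
Import GRing.Theory.

(* Trees on vertex set {1,...,n} encoded by a parent list [s]:
   the i-th entry (0-based) of [s] is the parent of vertex i+2. *)

Definition pdeg (s : seq nat) (v : nat) : nat :=
  (v != 1) + count (pred1 v) s.

Fixpoint dend_par (d n : nat) : seq nat :=
  match n with
  | 0 => [::]
  | 1 => [::]
  | n'.+1 => let s := dend_par d n' in
             rcons s (head 0 [seq v <- iota 1 n' | pdeg s v <= d])
  end.

Definition tadj (n : nat) (s : seq nat) (u v : nat) : bool :=
  [&& 1 <= u <= n, 1 <= v <= n &
      ((2 <= u) && (nth 0 s (u - 2) == v)) || ((2 <= v) && (nth 0 s (v - 2) == u))].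

Definition dendrimer_adj (n d : nat) : rel nat := tadj n (dend_par d n).

Fixpoint within (e : rel nat) (n k u v : nat) : bool :=
  match k with
  | 0 => u == v
  | k'.+1 => within e n k' u v || has (fun w => within e n k' u w && e w v) (iota 1 n)
  end.

(* d(u,v) = least k with a walk of length <= k (for a connected graph on n
   vertices it is < n) *)
Definition gdist (e : rel nat) (n u v : nat) : nat :=
  find (fun k => within e n k u v) (iota 0 n).

Definition wiener_poly (e : rel nat) (n : nat) : {poly int} :=
  (\sum_(1 <= u < n.+1) \sum_(u.+1 <= v < n.+1) 'X^(gdist e n u v))%R.

Definition nk (d k : nat) : nat := 2 + (d.+1) * ((d ^ k - 1) %/ (d - 1)).

Definition Wk (d k : nat) : {poly int} :=
  wiener_poly (dendrimer_adj (nk d k - 1) d) (nk d k - 1).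

From mathcomp Require Import all_boot all_order all_algebra.
From mathcomp Require Import ring zify.
Import GRing.Theory.

Set Implicit Arguments.
Unset Strict Implicit.
Unset Printing Implicit Defensive.

(* Label the dendrimer breadth first, so that the parent of v > 1 is (v - 3) %/ d + 1, the graph
   distance is the tree distance and the complete dendrimer of depth k is {1, ..., n_k - 1}.
   Group ordered pairs of vertices by levels.  The sums of q^d(u,v) over all pairs (H), over
   pairs whose first vertex is a leaf (P) and over pairs of leaves (Q), together with the number
   l of leaves, change linearly when every leaf receives c children (c = d + 1 at the root,
   c = d afterwards):
     l' = c l,   Q' = q^2 c^2 Q + (1 - q^2) l',   P' = q c P + Q',   H' = H + 2 q c P + Q'.
   The form (q c - 1) P - q c Q + (1 + q) l is multiplied by q c at each step and vanishes after
   the first one, which removes the eigenvalue q c.  The remaining eigenvalues 1, d and d^2 q^2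
   give the denominator, and the first terms of 2 W_k = H_k - n_k + 1 give the numerator. *)

(** * Distances in a tree given by its parent map *)

Section WalkBounds.

Variables (e : rel nat) (n : nat).

Lemma within_refl k u : within e n k u u.
Proof. by elim: k => [|k IH] /=; rewrite ?eqxx ?IH. Qed.

Lemma within_mono k l u v : k <= l -> within e n k u v -> within e n l u v.
Proof.
move=> /subnK <-; elim: (l - k) => [//|m IH] h.
by rewrite addSn /= IH.
Qed.

Lemma within_cat a b u w v :
  within e n a u w -> within e n b w v -> within e n (a + b) u v.
Proof.
move=> huw; elim: b v => [|b IH] v /=; first by move/eqP <-; rewrite addn0.
rewrite addnS /=; case/orP => [/IH -> //| /hasP [x hx /andP [hwx hxv]]].
by apply/orP; right; apply/hasP; exists x; rewrite ?IH ?hxv.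
Qed.

Lemma within_edge u v : 1 <= u <= n -> e u v -> within e n 1 u v.
Proof.
move=> hu huv /=; apply/orP; right; apply/hasP; exists u; last by rewrite eqxx.
by rewrite mem_iota; lia.
Qed.

End WalkBounds.

Arguments within_cat {e n a b u} w {v}.

Lemma find_leq_iota t n : t < n -> find (leq t) (iota 0 n) = t.
Proof.
move=> htn; rewrite -(subnKC (ltnW htn)) iotaD find_cat.
have -> : has (leq t) (iota 0 t) = false by apply/hasPn => x; rewrite mem_iota; lia.
by rewrite size_iota add0n -(subnSK htn) /= leqnn addn0.
Qed.

Section ParentTree.

Variable p : nat -> nat.
Hypothesis p_lt : forall v, 0 < v -> p v < v.
Hypothesis p_gt0 : forall v, 1 < v -> 0 < p v.

Fixpoint tdist_rec (fuel u v : nat) : nat :=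
  if fuel is fuel'.+1 then
    if u == v then 0
    else if u < v then (tdist_rec fuel' u (p v)).+1 else (tdist_rec fuel' (p u) v).+1
  else 0.

(* Since [p v < v], the larger endpoint is never an ancestor of the smaller one, so a
   geodesic leaves it through its parent. *)
Definition tdist u v := tdist_rec (u + v) u v.

Lemma tdist_rec_fuel f g u v : u + v <= f -> u + v <= g -> tdist_rec f u v = tdist_rec g u v.
Proof.
elim: f g u v => [|f IH] [|g] u v /= hf hg //; try by have [-> ->] : u = 0 /\ v = 0 by lia.
case: eqP => // /eqP huv.
by case: ifP => huv'; congr S; apply: IH; have := @p_lt u; have := @p_lt v; lia.
Qed.

Lemma tdistnn u : tdist u u = 0.
Proof. by rewrite /tdist; case: (u + u) => //= f; rewrite eqxx. Qed.

Lemma tdistE u v : tdist u v =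
  if u == v then 0 else if u < v then (tdist u (p v)).+1 else (tdist (p u) v).+1.
Proof.
case: eqP => [-> | /eqP huv]; first exact: tdistnn.
rewrite /tdist; case Euv: (u + v) => [|f] /=; first lia.
rewrite ifN_eq //.
by case: ifP => huv'; congr S; apply: tdist_rec_fuel; have := @p_lt u; have := @p_lt v; lia.
Qed.

Lemma tdist_ltE u v : u < v -> tdist u v = (tdist u (p v)).+1.
Proof. by move=> huv; rewrite tdistE huv ltn_eqF. Qed.

Lemma tdist_gtE u v : v < u -> tdist u v = (tdist (p u) v).+1.
Proof. by move=> hvu; rewrite tdistE gtn_eqF // ltnNge ltnW. Qed.

Lemma tdistC u v : tdist u v = tdist v u.
Proof.
move: {2}(u + v) (leqnn (u + v)) => m; elim: m u v => [|m IH] u v huv.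
  by have [-> ->] : u = 0 /\ v = 0 by lia.
case: (ltngtP u v) => [huv' | hvu | -> //].
- by rewrite tdist_ltE // [tdist v u]tdist_gtE // IH //; have := @p_lt v; lia.
- by rewrite tdist_gtE // [tdist v u]tdist_ltE // IH //; have := @p_lt u; lia.
Qed.

Lemma tdist_parent u x : 0 < x ->
  tdist u x <= (tdist u (p x)).+1 /\ tdist u (p x) <= (tdist u x).+1.
Proof.
move=> hx; have hpx := @p_lt x hx; elim/ltn_ind: u => u IH.
case: (ltngtP u x) => [hux | hxu | ->].
- by rewrite tdist_ltE //; lia.
- rewrite [tdist u x]tdist_gtE // [tdist u (p x)]tdist_gtE; last exact: ltn_trans hxu.
  by apply: IH; apply: p_lt; lia.
- by rewrite tdistnn tdist_gtE // tdistnn.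
Qed.

Lemma tdist_le_root u v : 0 < u -> 0 < v -> tdist u v <= tdist 1 u + tdist 1 v.
Proof.
move: {2}(u + v) (leqnn (u + v)) => m; elim: m u v => [|m IH] u v huv hu hv; first lia.
case: (ltngtP u v) => [huv' | hvu | ->]; last by rewrite tdistnn.
- rewrite tdist_ltE // [tdist 1 v]tdist_ltE; last lia.
  by have := IH u (p v); have := @p_lt v hv; have := @p_gt0 v (leq_ltn_trans hu huv'); lia.
- rewrite tdist_gtE // [tdist 1 u]tdist_ltE; last lia.
  by have := IH (p u) v; have := @p_lt u hu; have := @p_gt0 u (leq_ltn_trans hv hvu); lia.
Qed.

Variables (n : nat) (s : seq nat).
Hypothesis s_parent : forall w, 2 <= w <= n -> nth 0 s (w - 2) = p w.

Lemma tadjC u v : tadj n s u v = tadj n s v u.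
Proof. by rewrite /tadj orbC; do 2 case: (1 <= _ <= n). Qed.

Lemma tadj_parent v : 2 <= v <= n -> tadj n s v (p v).
Proof.
move=> hv; have := @p_lt v; have := @p_gt0 v.
by rewrite /tadj s_parent // eqxx /= andbT; lia.
Qed.

Lemma tadjP u v : tadj n s u v ->
  [/\ 1 <= u <= n, 1 <= v <= n & (1 < u) && (p u == v) || (1 < v) && (p v == u)].
Proof.
case/and3P=> hu hv huv; split=> //.
by case/orP: huv => /andP [h /eqP <-]; rewrite s_parent ?eqxx ?orbT //; lia.
Qed.

Lemma within_at_tdist u v : 1 <= u <= n -> 1 <= v <= n -> within (tadj n s) n (tdist u v) u v.
Proof.
move: {2}(u + v) (leqnn (u + v)) => m; elim: m u v => [|m IH] u v huv hu hv; first lia.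
case: (ltngtP u v) => [huv' | hvu | ->]; last by rewrite tdistnn within_refl.
- have hpv : 1 <= p v < v by have := @p_lt v; have := @p_gt0 v; lia.
  rewrite tdist_ltE // -addn1; apply: (within_cat (p v)).
    by apply: IH => //; lia.
  by apply: within_edge; [lia | rewrite tadjC tadj_parent //; lia].
- have hpu : 1 <= p u < u by have := @p_lt u; have := @p_gt0 u; lia.
  rewrite tdist_gtE // -add1n; apply: (within_cat (p u)).
    by apply: within_edge; [lia | rewrite tadj_parent //; lia].
  by apply: IH => //; lia.
Qed.

Lemma within_tdistE k u v : 1 <= u <= n -> 1 <= v <= n ->
  within (tadj n s) n k u v = (tdist u v <= k).
Proof.
move=> hu hv; apply/idP/idP; last by move=> hk; apply: within_mono hk _; exact: within_at_tdist.
elim: k v hv => [|k IH] v hv /=; first by move/eqP <-; rewrite tdistnn.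
case/orP => [/(IH v hv)/leqW // | /hasP [w hw /andP [huw /tadjP [hw' _ hwv]]]].
have := IH w hw' huw; case/orP: hwv => /andP [_ /eqP <-].
- by have := @tdist_parent u w; lia.
- by have := @tdist_parent u v; lia.
Qed.

Lemma gdist_tdist u v : 1 <= u <= n -> 1 <= v <= n -> tdist u v < n ->
  gdist (tadj n s) n u v = tdist u v.
Proof.
move=> hu hv hlt; rewrite /gdist (@eq_find _ _ (leq (tdist u v))) ?find_leq_iota //.
by move=> k; apply: within_tdistE.
Qed.

End ParentTree.

(** * The dendrimer *)

Lemma head_filter_iota (P : pred nat) a m x : a <= x < a + m -> P x ->
  (forall v, a <= v < x -> ~~ P v) -> head 0 [seq v <- iota a m | P v] = x.
Proof.
move=> hx hPx hP; have -> : m = (x - a) + (m - (x - a)).-1.+1 by lia.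
rewrite iotaD filter_cat subnKC; last lia.
have -> : [seq v <- iota a (x - a) | P v] = [::].
  apply/eqP; rewrite -[_ == _]negbK -has_filter; apply/hasPn => v.
  by rewrite mem_iota => hv; apply: hP; lia.
by rewrite /= hPx.
Qed.

Lemma count_interval_iota a b c m :
  count (fun w => a <= w < b) (iota c m) = minn b (c + m) - maxn a c.
Proof.
elim: m => [|m IH]; first by rewrite /=; lia.
by rewrite -[m.+1]addn1 iotaD count_cat IH /=; lia.
Qed.

Section DendrimerParent.

Variable d : nat.
Hypothesis d_gt0 : 0 < d.

(* Breadth-first labelling: 2, ..., d + 2 are the children of the root 1, and the children of
   v > 1 are the d consecutive vertices starting at [first_child v]. *)
Definition dend_parent v := if v <= 1 then 0 else (v - 3) %/ d + 1.

Definition first_child v := if v == 1 then 2 else d * (v - 1) + 3.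

Lemma first_child_gt1 v : 2 <= first_child v.
Proof. by rewrite /first_child; case: ifP => // _; rewrite addnC. Qed.

Lemma dend_parent_lt v : 0 < v -> dend_parent v < v.
Proof. by rewrite /dend_parent; case: ifP => // hv _; have := leq_div (v - 3) d; lia. Qed.

Lemma dend_parent_gt0 v : 1 < v -> 0 < dend_parent v.
Proof. by rewrite /dend_parent ltnNge => /negbTE ->; rewrite addn1. Qed.

Lemma dend_parent_ltE v w : 0 < v -> 1 < w -> (dend_parent w < v) = (w < first_child v).
Proof.
move=> hv hw; rewrite /dend_parent /first_child ifF; last lia.
rewrite addn1; case: eqP => [-> | /eqP hv1]; first by rewrite ltnS ltn0; lia.
rewrite -(prednK hv) ltnS ltn_divLR //; lia.
Qed.

Lemma dend_parent_eq v w : 0 < v -> 1 < w ->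
  (dend_parent w == v) = (first_child v <= w < first_child v.+1).
Proof.
move=> hv hw; have := @dend_parent_ltE v.+1 w; have := @dend_parent_ltE v w; lia.
Qed.

Lemma dend_full_degree v : 0 < v -> (v != 1) + (first_child v.+1 - first_child v) = d.+1.
Proof. by case: v => [|[|v]] //= _; rewrite /first_child /=; lia. Qed.

Lemma pdeg_dend_parent m v : 0 < v ->
  pdeg (map dend_parent (iota 2 m)) v = (v != 1) + (minn (first_child v.+1) (2 + m) - first_child v).
Proof.
move=> hv; rewrite /pdeg count_map (@eq_in_count _ _ (fun w => first_child v <= w < first_child v.+1)).
  by rewrite count_interval_iota (maxn_idPl (first_child_gt1 v)).
by move=> w; rewrite mem_iota /= => hw; apply: dend_parent_eq; lia.
Qed.

End DendrimerParent.

Lemma dend_parE d n : 0 < d -> dend_par d n = map (dend_parent d) (iota 2 n.-1).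
Proof.
move=> hd; elim: n => [|[|n] IH] //.
have iota_rcons : iota 2 n.+1 = rcons (iota 2 n) n.+2 by rewrite -{1}(addn1 n) iotaD -cats1 add2n.
have -> : dend_par d n.+2 =
    rcons (dend_par d n.+1) (head 0 [seq v <- iota 1 n.+1 | pdeg (dend_par d n.+1) v <= d]) by [].
rewrite IH [n.+1.-1]/= iota_rcons map_rcons.
set x := dend_parent d n.+2.
have hx : 0 < x by apply: dend_parent_gt0.
have := dend_parent_ltE hd hx (isT : 1 < n.+2).
have := dend_parent_ltE hd (ltn0Sn x) (isT : 1 < n.+2).
rewrite ltnn ltnS leqnn => /esym hxn /esym hnx.
congr rcons; apply: head_filter_iota.
- by have := dend_parent_lt hd (isT : 0 < n.+2); lia.
- by rewrite pdeg_dend_parent //; have := dend_full_degree hd hx; lia.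
- move=> v hv; rewrite pdeg_dend_parent //; last lia.
  have := @dend_full_degree d hd v; have := dend_parent_ltE hd (ltn0Sn v) (isT : 1 < n.+2).
  rewrite /x in hv *; lia.
Qed.

Local Notation ddist d := (tdist (dend_parent d)).

Fixpoint dend_order d k := if k is k'.+1 then d * dend_order d k' + 2 else 1.

Lemma dend_order_sum d k : dend_order d k = 1 + d.+1 * \sum_(0 <= i < k) d ^ i.
Proof.
elim: k => [|k IH]; first by rewrite big_geq // muln0.
rewrite /= IH big_nat_recl // expn0.
under [X in _ = 1 + _ * (1 + X)]eq_bigr => i _ do rewrite expnS.
by rewrite -big_distrr /=; lia.
Qed.

Lemma nk_dend_order d k : 1 < d -> nk d k - 1 = dend_order d k.
Proof.
move=> hd; rewrite /nk dend_order_sum !subn1 predn_exp mulKn ?big_mkord; lia.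
Qed.

Lemma dend_order_gt0 d k : 0 < dend_order d k.
Proof. by case: k => //= k; rewrite addn2. Qed.

Lemma double_lt_dend_order d k : 1 < d -> 2 * k < dend_order d k.
Proof. by move=> hd; elim: k => [|k IH] //=; nia. Qed.

Lemma first_child_dend_order d k : first_child d (dend_order d k).+1 = (dend_order d k.+1).+1.
Proof.
rewrite /first_child eqSS; have /negbTE -> : dend_order d k != 0 by rewrite -lt0n dend_order_gt0.
by rewrite /=; lia.
Qed.

Lemma dend_parent_le_order d k v : 0 < d -> 1 < v <= dend_order d k.+1 ->
  dend_parent d v <= dend_order d k.
Proof.
by move=> hd /andP [hv1 hv]; rewrite -ltnS dend_parent_ltE // first_child_dend_order ltnS.
Qed.

Lemma dend_depth_le d k v : 0 < d -> 0 < v <= dend_order d k -> ddist d 1 v <= k.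
Proof.
move=> hd; elim: k v => [|k IH] v hv; first by have -> : v = 1 by move: hv => /=; lia.
case: (ltngtP v 1) => [hv1 | h1v | ->]; [lia | | by rewrite tdistnn].
rewrite (tdist_ltE (dend_parent_lt hd)) // ltnS IH //; have := dend_parent_gt0 d h1v.
by have := @dend_parent_le_order d k v hd; lia.
Qed.

Lemma dend_dist_lt_order d k u v : 1 < d -> 0 < u <= dend_order d k -> 0 < v <= dend_order d k ->
  ddist d u v < dend_order d k.
Proof.
move=> hd hu hv; have hd0 : 0 < d by lia.
have := @tdist_le_root _ (dend_parent_lt hd0) (@dend_parent_gt0 d) u v.
have := dend_depth_le hd0 hu; have := dend_depth_le hd0 hv; have := double_lt_dend_order k hd.
lia.
Qed.

Local Open Scope ring_scope.

Lemma Wk_dist d k : (1 < d)%N -> Wk d k =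
  \sum_(1 <= u < (dend_order d k).+1) \sum_(u.+1 <= v < (dend_order d k).+1) 'X^(ddist d u v).
Proof.
move=> hd; have hd0 : (0 < d)%N by lia.
rewrite /Wk /wiener_poly /dendrimer_adj nk_dend_order //.
apply: eq_big_nat => u hu; apply: eq_big_nat => v hv.
rewrite (gdist_tdist (dend_parent_lt hd0) (@dend_parent_gt0 d)) //; try lia.
- move=> w hw; rewrite dend_parE // (nth_map 0%N); last by rewrite size_iota; lia.
  by rewrite nth_iota; [congr dend_parent; lia | lia].
- by apply: dend_dist_lt_order => //; lia.
Qed.

Definition level_start d k := if k is k'.+1 then (dend_order d k').+1 else 1%N.

Definition branching d k := if k is 0 then d.+1 else d.

Lemma first_child_level_start d k : first_child d (level_start d k) = (dend_order d k).+1.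
Proof. by case: k => [|k]; rewrite ?first_child_dend_order. Qed.

Lemma first_child_mono d v w : (0 < v <= w)%N -> (first_child d v <= first_child d w)%N.
Proof. by rewrite /first_child; case: eqP => [->|/eqP hv1]; case: eqP => [->|/eqP hw1]; nia. Qed.

(** * Level decomposition of the distance sums *)

Lemma sum_square_sym (V : nmodType) (f : nat -> nat -> V) a b :
  (forall u v, f u v = f v u) ->
  \sum_(a <= u < b) \sum_(a <= v < b) f u v =
  (\sum_(a <= u < b) \sum_(u.+1 <= v < b) f u v) *+ 2 + \sum_(a <= u < b) f u u.
Proof.
move=> fC; elim: b => [|b IH]; first by rewrite !big_geq // mul0rn addr0.
case: (leqP a b) => hab; last by rewrite !big_geq // mul0rn addr0.
set col := \sum_(a <= u < b) f u b.
have square : \sum_(a <= u < b.+1) \sum_(a <= v < b.+1) f u v =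
    \sum_(a <= u < b) \sum_(a <= v < b) f u v + col *+ 2 + f b b.
  rewrite big_nat_recr //= [\sum_(a <= v < b.+1) f b v]big_nat_recr //=.
  rewrite (eq_bigr (fun u => \sum_(a <= v < b) f u v + f u b)); last first.
    by move=> u _; rewrite big_nat_recr.
  have -> : \sum_(a <= v < b) f b v = col by apply: eq_bigr => v _; rewrite fC.
  by rewrite big_split /= mulr2n !addrA.
have triangle : \sum_(a <= u < b.+1) \sum_(u.+1 <= v < b.+1) f u v =
    \sum_(a <= u < b) \sum_(u.+1 <= v < b) f u v + col.
  rewrite big_nat_recr //= [\sum_(b.+1 <= v < b.+1) _]big_geq // addr0 -big_split /=.
  by apply: eq_big_nat => u /andP [_ hub]; rewrite big_nat_recr.
rewrite square triangle big_nat_recr //= IH mulrnDl.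
by rewrite -!addrA; congr (_ + (_ + _)); rewrite addrCA; congr (_ + _); exact: addrCA.
Qed.

Lemma sum_children (V : nmodType) d (g : nat -> V) a b : (0 < d)%N -> (0 < a <= b)%N ->
  \sum_(first_child d a <= x < first_child d b) g (dend_parent d x) =
  \sum_(a <= v < b) g v *+ (first_child d v.+1 - first_child d v).
Proof.
move=> hd /andP [ha]; elim: b => [|b IH] hab; first by lia.
have [-> | /eqP hab'] := eqVneq a b.+1; first by rewrite big_geq // big_geq.
rewrite big_nat_recr; last lia.
rewrite -IH; last lia.
rewrite (big_cat_nat _ (n := first_child d b)) /=; try by apply: first_child_mono; lia.
congr (_ + _); rewrite -sumr_const_nat; apply: eq_big_nat => x hx.
by congr g; apply/eqP; rewrite dend_parent_eq //; have := first_child_gt1 d b; lia.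
Qed.

Lemma sum_next_level (V : nmodType) d k (g : nat -> V) : (0 < d)%N ->
  \sum_((dend_order d k).+1 <= x < (dend_order d k.+1).+1) g (dend_parent d x) =
  (\sum_(level_start d k <= v < (dend_order d k).+1) g v) *+ branching d k.
Proof.
move=> hd; rewrite -first_child_dend_order -{1}first_child_level_start.
rewrite sum_children //; last by case: k => //= k; nia.
rewrite -sumrMnl; apply: eq_big_nat => v hv; congr (_ *+ _).
rewrite /first_child; case: k hv => [|k] /= hv; first by have -> : v = 1%N by [lia]; rewrite /=; lia.
by have hM := dend_order_gt0 d k; rewrite !ifF; nia.
Qed.

Section LevelRecursion.

Variables (R : comPzRingType) (x : R).

Definition grow (c : R) (s : R * R * R * R) : R * R * R * R :=
  let: (E, P, Q, l) := s in
  let l' := c * l in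
  let Q' := x ^+ 2 * c ^+ 2 * Q + (1 - x ^+ 2) * l' in
  (E + (x * c * P) *+ 2 + Q' - l', x * c * P + Q', Q', l').

Definition grow_inv (c : R) (s : R * R * R * R) : R :=
  let: (_, P, Q, l) := s in (x * c - 1) * P - x * c * Q + (1 + x) * l.

Lemma grow_invE c s : grow_inv c (grow c s) = x * c * grow_inv c s.
Proof. by case: s => [[[E P] Q] l] /=; ring. Qed.

(* The factor in front of grow_inv is the left-hand side on the orbit of (0, 1, 0, 0). *)
Lemma grow_recurrence c s (e := fun n => (iter n (grow c) s).1.1.1) :
  e 3 - (1 + c + c ^+ 2 * x ^+ 2) * e 2 + (c + c ^+ 2 * x ^+ 2 + c ^+ 3 * x ^+ 2) * e 1
    - c ^+ 3 * x ^+ 2 * e 0 = 2 * c ^+ 3 * x ^+ 2 * (1 - x) * grow_inv c s.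
Proof. by case: s @e => [[[E P] Q] l] /=; ring. Qed.

End LevelRecursion.

Definition wsum d a b c e : {poly int} :=
  \sum_(a <= u < b) \sum_(c <= v < e) 'X^(ddist d u v).

Lemma wsum_splitl d a m b c e : (a <= m <= b)%N ->
  wsum d a b c e = wsum d a m c e + wsum d m b c e.
Proof. by move=> ham; rewrite /wsum (big_cat_nat _ (n := m)) //; lia. Qed.

Lemma wsum_splitr d a b c m e : (c <= m <= e)%N ->
  wsum d a b c e = wsum d a b c m + wsum d a b m e.
Proof.
move=> hcm; rewrite /wsum -big_split; apply: eq_bigr => u _.
by rewrite (big_cat_nat _ (n := m)) //; lia.
Qed.

Lemma wsumC d a b c e : (0 < d)%N -> wsum d a b c e = wsum d c e a b.
Proof.
move=> hd; rewrite /wsum exchange_big; apply: eq_bigr => u _; apply: eq_bigr => v _.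
by rewrite (tdistC (dend_parent_lt hd)).
Qed.

Section Levels.

Variable d : nat.
Hypothesis d_gt0 : (0 < d)%N.

Local Notation order k := (dend_order d k).
Local Notation dist := (ddist d).

Let dpar_lt := dend_parent_lt d_gt0.

Definition level_size k := ((order k).+1 - level_start d k)%N.

Definition tree_sum k := wsum d 1 (order k).+1 1 (order k).+1.
Definition leaf_sum k := wsum d (level_start d k) (order k).+1 1 (order k).+1.
Definition leaf_pair_sum k :=
  wsum d (level_start d k) (order k).+1 (level_start d k) (order k).+1.

Lemma level_sizeS k : level_size k.+1 = (branching d k * level_size k)%N.
Proof. by case: k => [|k] /=; rewrite /level_size /=; nia. Qed.

Lemma dist_next_level_pair k x y : (order k < x <= order k.+1)%N -> (order k < y <= order k.+1)%N ->
  'X^(dist x y) =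
  'X^2 * 'X^(dist (dend_parent d x) (dend_parent d y)) + (if y == x then 1 - 'X^2 else 0)
  :> {poly int}.
Proof.
move=> hx hy; have [-> | hxy] := eqVneq y x; first by rewrite !tdistnn mulr1 addrC subrK.
have px := @dend_parent_le_order d k x d_gt0; have py := @dend_parent_le_order d k y d_gt0.
have [hlt | hgt] : (x < y \/ y < x)%N by lia.
- rewrite (tdist_ltE dpar_lt) // (tdist_gtE dpar_lt); last by lia.
  by rewrite addr0 -exprD.
- rewrite (tdist_gtE dpar_lt) // (tdist_ltE dpar_lt); last by lia.
  by rewrite addr0 -exprD.
Qed.

Lemma wsum_next_level_tree k :
  wsum d (order k).+1 (order k.+1).+1 1 (order k).+1 = ('X * leaf_sum k) *+ branching d k.
Proof.
pose g l : {poly int} := 'X * \sum_(1 <= v < (order k).+1) 'X^(dist l v).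
rewrite /wsum (eq_big_nat _ _ (F2 := fun x => g (dend_parent d x))).
  by rewrite sum_next_level // /g /leaf_sum /wsum -mulr_sumr.
move=> x hx; rewrite /g mulr_sumr; apply: eq_big_nat => v hv.
by rewrite (tdist_gtE dpar_lt) ?exprS //; lia.
Qed.

Lemma wsum_next_level_pairs k :
  wsum d (order k).+1 (order k.+1).+1 (order k).+1 (order k.+1).+1 =
  ('X^2 * leaf_pair_sum k) *+ (branching d k * branching d k) + (1 - 'X^2) *+ level_size k.+1.
Proof.
pose g l l' : {poly int} := 'X^2 * 'X^(dist l l').
rewrite /wsum (eq_big_nat _ _ (F2 := fun x =>
    \sum_((order k).+1 <= y < (order k.+1).+1) g (dend_parent d x) (dend_parent d y) +
    (1 - 'X^2))); last first.
  move=> x hx; under eq_big_nat => y hy do rewrite (dist_next_level_pair hx hy).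
  by rewrite big_split /= -big_mkcond big_nat1_eq hx.
rewrite big_split /= sumr_const_nat; congr (_ + _).
under eq_bigr => x _ do rewrite (sum_next_level k _ d_gt0).
rewrite sumrMnl exchange_big -[(d * order k + 2)%N]/(order k.+1).
under eq_bigr => l _ do rewrite (sum_next_level k (fun x => g x l) d_gt0).
rewrite sumrMnl -mulrnA /leaf_pair_sum /wsum mulr_sumr; congr (_ *+ _).
by rewrite exchange_big; apply: eq_bigr => u _; rewrite mulr_sumr.
Qed.

Lemma tree_sumS k : tree_sum k.+1 =
  tree_sum k + wsum d (order k).+1 (order k.+1).+1 1 (order k).+1 *+ 2 +
  wsum d (order k).+1 (order k.+1).+1 (order k).+1 (order k.+1).+1.
Proof.
have hk : (1 <= (order k).+1 <= (order k.+1).+1)%N by rewrite /=; nia.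
rewrite /tree_sum (@wsum_splitl d 1 (order k).+1) //.
rewrite (@wsum_splitr d 1 _ 1 (order k).+1) // (@wsum_splitr d (order k).+1 _ 1 (order k).+1) //.
by rewrite [wsum d 1 _ (order k).+1 _]wsumC // mulr2n !addrA.
Qed.

Lemma leaf_sumS k : leaf_sum k.+1 =
  wsum d (order k).+1 (order k.+1).+1 1 (order k).+1 +
  wsum d (order k).+1 (order k.+1).+1 (order k).+1 (order k.+1).+1.
Proof. by rewrite /leaf_sum (@wsum_splitr d _ _ 1 (order k).+1) //= ltnS; nia. Qed.

Definition level_state k : {poly int} * {poly int} * {poly int} * {poly int} :=
  (tree_sum k - (order k)%:R, leaf_sum k, leaf_pair_sum k, (level_size k)%:R).

Lemma dend_order_succ k : order k.+1 = (order k + level_size k.+1)%N.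
Proof. by rewrite /level_size /=; nia. Qed.

Lemma level_stateS k : level_state k.+1 = grow 'X (branching d k)%:R (level_state k).
Proof.
rewrite /level_state tree_sumS leaf_sumS wsum_next_level_tree /leaf_pair_sum wsum_next_level_pairs.
rewrite -/(leaf_pair_sum k) dend_order_succ level_sizeS natrD !natrM.
by congr (_, _, _, _); ring.
Qed.

Lemma level_state0 : level_state 0 = (0, 1, 1, 1).
Proof.
by rewrite /level_state /tree_sum /leaf_sum /leaf_pair_sum /wsum !big_nat1 tdistnn subrr.
Qed.

End Levels.

(** * The recurrence and the generating function *)

Lemma bin2_double n : ('C(n, 2) * 2 = n * n.-1)%N.
Proof. by elim: n => [|n IH] //; rewrite binS bin1 mulnDl IH; case: n {IH} => //= n; nia. Qed.

Lemma mulrn2I (R : idomainType) (x y : R) : 2%:R != 0 :> R -> x *+ 2 = y *+ 2 -> x = y.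
Proof. by move=> two_neq0 exy; apply: (mulfI two_neq0); rewrite !mulr_natl exy. Qed.

Lemma coef_series (R : nzRingType) (w : nat -> R) N i : w 0%N = 0 -> (i <= N)%N ->
  (\sum_(1 <= k < N.+1) (w k)%:P * 'X^k)`_i = w i.
Proof.
move=> w0 hi; rewrite coef_sum (eq_big_nat _ _ (F2 := fun k => if k == i then w i else 0)).
  by rewrite -big_mkcond big_nat1_eq; case: i hi => [|i] hi //=; rewrite ltnS hi.
by move=> k _; rewrite coefCM coefXn eq_sym; case: eqP => [->|_]; rewrite ?mulr1 ?mulr0.
Qed.

Section WienerRecurrence.

Variable d : nat.
Hypothesis d_gt1 : (1 < d)%N.

Let d_gt0 : (0 < d)%N := ltnW d_gt1.

Local Notation state k := (level_state d k).
Local Notation c := (d%:R : {poly int}).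

Let two_neq0 : 2%:R != 0 :> {poly int}.
Proof. by rewrite -polyC_natr polyC_eq0. Qed.

Lemma Wk_double k : Wk d k *+ 2 = (state k).1.1.1.
Proof.
rewrite Wk_dist // /level_state /tree_sum /wsum /= sum_square_sym.
  by under [X in _ *+ 2 + X]eq_bigr do rewrite tdistnn; rewrite sumr_const_nat subn1 addrK.
by move=> u v; rewrite (tdistC (dend_parent_lt d_gt0)).
Qed.

Lemma level_state_iter k n : state (n + k.+1) = iter n (grow 'X c) (state k.+1).
Proof. by elim: n => [|n IH] //; rewrite addSn (level_stateS d_gt0) iterS IH addnS. Qed.

Lemma level_state_inv k : grow_inv 'X c (state k.+1) = 0.
Proof.
elim: k => [|k IH]; last by rewrite (level_stateS d_gt0) grow_invE IH mulr0.
by rewrite (level_stateS d_gt0) (level_state0 d) /=; ring.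
Qed.

Lemma Wk_recurrence k :
  Wk d k.+3 - (1 + c + c ^+ 2 * 'X ^+ 2) * Wk d k.+2
    + (c + c ^+ 2 * 'X ^+ 2 + c ^+ 3 * 'X ^+ 2) * Wk d k.+1 - c ^+ 3 * 'X ^+ 2 * Wk d k = 0.
Proof.
apply: (mulrn2I two_neq0); rewrite mul0rn !(mulrnBl, mulrnDl) -!mulrnAr !Wk_double.
case: k => [|k].
  by rewrite !(level_stateS d_gt0) (level_state0 d) /=; ring.
rewrite -[k.+4]/(3 + k.+1)%N -[k.+3]/(2 + k.+1)%N -[k.+2]/(1 + k.+1)%N !level_state_iter.
by apply: etrans (grow_recurrence 'X c (state k.+1)) _; rewrite level_state_inv mulr0.
Qed.

Let bin2E : 'C(d.+1, 2)%:R *+ 2 = d.+1%:R * c.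
Proof. by rewrite -mulr_natr -natrM bin2_double natrM. Qed.

Lemma Wk0 : Wk d 0 = 0.
Proof. by rewrite Wk_dist // big_nat1 big_geq. Qed.

Lemma Wk1 : Wk d 1 = d.+1%:R * 'X + 'C(d.+1, 2)%:R * 'X ^+ 2.
Proof.
apply: (mulrn2I two_neq0); rewrite Wk_double (level_stateS d_gt0) (level_state0 d) /=.
by rewrite mulrnDl -[_ * 'X ^+ 2 *+ 2]mulrnAl bin2E; ring.
Qed.

Lemma Wk2 : Wk d 2 - (1 + c + c ^+ 2 * 'X ^+ 2) * Wk d 1 = 'C(d.+1, 2)%:R * 'X ^+ 2.
Proof.
apply: (mulrn2I two_neq0); rewrite mulrnBl -mulrnAr !Wk_double !(level_stateS d_gt0) (level_state0 d) /=.
by rewrite -[in RHS]mulrnAl bin2E; ring.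
Qed.

End WienerRecurrence.

Theorem proposition4p1 (d : nat) (hd : (2 <= d)%N) :
  let q : {poly int} := 'X in
  let num : {poly {poly int}} :=
    'X * ((d.+1%:R * q)%:P + ('C(d.+1, 2)%:R * q ^+ 2)%:P * (1 + 'X)) in
  let den : {poly {poly int}} :=
    (1 - 'X) * (1 - (d%:R)%:P * 'X) * (1 - ((d ^ 2)%:R * q ^+ 2)%:P * 'X) in
  forall N j : nat, (j <= N)%N ->
    (den * \sum_(1 <= k < N.+1) (Wk d k)%:P * 'X^k)`_j = num`_j.
Proof.
move=> q num den N j hjN; set c : {poly int} := d%:R; set F := \sum_(1 <= k < N.+1) _.
have coefF i : (i <= N)%N -> F`_i = Wk d i by apply: coef_series; apply: Wk0.
have -> : den * F = F - (1 + c + c ^+ 2 * 'X ^+ 2)%:P * ('X^1 * F)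
    + (c + c ^+ 2 * 'X ^+ 2 + c ^+ 3 * 'X ^+ 2)%:P * ('X^2 * F) - (c ^+ 3 * 'X ^+ 2)%:P * ('X^3 * F).
  by rewrite /den /q /c natrX; ring.
have -> : num = (d.+1%:R * 'X + 'C(d.+1, 2)%:R * 'X ^+ 2)%:P * 'X^1
    + ('C(d.+1, 2)%:R * 'X ^+ 2)%:P * 'X^2 by rewrite /num /q; ring.
rewrite !coefB !coefD !coefN !coefCM !coefXnM !coefXn.
case: j hjN => [|[|[|k]]] hk /=; rewrite ?subSS ?subn0 !coefF ?Wk0 //; try lia.
- by ring.
- by rewrite (Wk1 hd); ring.
- by rewrite -(Wk2 hd); ring.
- by rewrite (Wk_recurrence hd); ring.
Qed.
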